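(* In the setting of the context, fix a round $t>n$ and suppose the event $\mathcal E'_t=\{\forall M\in\mathcal M:\ |\theta(M)-\widehat\theta_t(M)|\le C_t\|\chi_M\|_{A_{\mathbf x_t}^{-1}}\}$ occurs. If SAQM terminates at round $t$, returning $\widehat M^*=\widehat M^*_t$, then $\theta(M^* )-\theta(\widehat M^* )\le\varepsilon$.
   Context: Setting: $n$ arms with unknown means $\theta\in\mathbb{R}^n$; integer $2\le k\le n$; $\mathcal M=\{M\subseteq[n]:|M|=k\}$; $\theta(S)=\sum_{e\in S}\theta(e)$; $\chi_M$ the indicator vector of $M$; $M^*=\arg\max_{M\in\mathcal M}\theta(M)$. After $t$ pulls $M_1,\dots,M_t$ with full-bandit observations $r_{M_i}$, $A_{\mathbf x_t}=\sum_{i\le t}\chi_{M_i}\chi_{M_i}^\top$ (invertible), $\widehat\theta_t=A_{\mathbf x_t}^{-1}\sum_{i\le t}\chi_{M_i}r_{M_i}$, $\|x\|_B=\sqrt{x^\top Bx}$, $\widehat M^*_t=\arg\max_{M\in\mathcal M}\widehat\theta_t(M)$, and $C_t>0$ is a confidence radius. SAQM computes $M'_t\in\mathcal M$ with $\|\chi_{M'_t}\|_{A_{\mathbf x_t}^{-1}}\ge\alpha_t\max_{M\in\mathcal M}\|\chi_M\|_{A_{\mathbf x_t}^{-1}}$ for some $\alpha_t\in(0,1]$, sets $Z_t=C_t\|\chi_{M'_t}\|_{A_{\mathbf x_t}^{-1}}$, and terminates at round $t$ exactly when $\widehat\theta_t(\widehat M^*_t)-C_t\|\chi_{\widehat M^*_t}\|_{A_{\mathbf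 x_t}^{-1}}\ge\max_{M\in\mathcal M\setminus\{\widehat M^*_t\}}\widehat\theta_t(M)+Z_t/\alpha_t-\varepsilon$, where $\varepsilon>0$ is the accuracy parameter. *)

From HB Require Import structures.
From mathcomp Require Import all_boot all_order all_algebra.
Set Implicit Arguments. Unset Strict Implicit. Unset Printing Implicit Defensive.
Import Order.TTheory GRing.Theory Num.Theory.
Local Open Scope ring_scope.

Section Defs.
Variable R : rcfType.
Variable n : nat.

Definition chi (M : {set 'I_n}) : 'cV[R]_n := \col_i (i \in M)%:R.

Definition valS (theta : 'cV[R]_n) (S : {set 'I_n}) : R := \sum_(e in S) theta e 0.

Definition mxnorm (B : 'M[R]_n) (x : 'cV[R]_n) : R := Num.sqrt ((x^T *m B *m x) 0 0).

Definition Amat (t : nat) (pulls : 'I_t -> {set 'I_n}) : 'M[R]_n :=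
  \sum_(i < t) (chi (pulls i) *m (chi (pulls i))^T).

Definition thetahat (t : nat) (pulls : 'I_t -> {set 'I_n}) (r : 'I_t -> R) : 'cV[R]_n :=
  invmx (Amat pulls) *m (\sum_(i < t) (r i *: chi (pulls i))).

Definition calM (k : nat) : pred {set 'I_n} := fun M => #|M| == k.

(* max_{M in calM} ||chi_M||_B  (all terms are >= 0, so 0 is a neutral default) *)
Definition maxnorm (k : nat) (B : 'M[R]_n) : R :=
  \big[Num.max/0]_(M : {set 'I_n} | calM k M) mxnorm B (chi M).
End Defs.
Arguments Amat {R n t} pulls.
Arguments calM {n} k.
Arguments maxnorm {R n} k B.
Arguments chi {R n} M.
Arguments thetahat {R n t} pulls r.


From mathcomp Require Import all_boot all_order all_algebra.
From mathcomp Require Import lra.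

Set Implicit Arguments.
Unset Strict Implicit.
Unset Printing Implicit Defensive.
Import Order.TTheory GRing.Theory Num.Theory.
Local Open Scope ring_scope.

(* On the event E'_t the confidence width of Mstar is at most
   C_t max_M ||chi_M|| <= Z_t / alpha_t, so if Mstar <> Mhat the stopping rule
   applied to Mstar gives
     theta(Mstar) <= hat theta(Mstar) + Z_t / alpha_t
                  <= hat theta(Mhat) - C_t ||chi_Mhat|| + eps <= theta(Mhat) + eps. *)

Lemma confidence_gap_le (F : realDomainType) (x xh y yh wx wy z eps : F) :
  `|x - xh| <= wx -> `|y - yh| <= wy -> wx <= z ->
  xh + z - eps <= yh - wy -> x - y <= eps.
Proof. by rewrite !ler_norml => /andP[_ Hx] /andP[Hy _] Hwz Hstop; lra. Qed.

Lemma mxnorm_le_maxnorm (R : rcfType) (n k : nat) (B : 'M[R]_n) (M : {set 'I_n}) :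
  calM k M -> mxnorm B (chi M) <= maxnorm k B.
Proof. by move=> HM; rewrite /maxnorm (bigD1 M) //= le_max lexx. Qed.

Lemma approx_argmax_width_le (F : realFieldType) (c alpha w wmax w' : F) :
  0 <= c -> 0 < alpha -> w <= wmax -> alpha * wmax <= w' ->
  c * w <= c * w' / alpha.
Proof.
move=> c0 a0 Hw Hmax; rewrite ler_pdivlMr // -mulrA ler_wpM2l //.
by rewrite mulrC (le_trans _ Hmax) // ler_pM2l.
Qed.

Theorem lemma8 (R : rcfType) (n k t : nat) (theta : 'cV[R]_n)
  (pulls : 'I_t -> {set 'I_n}) (r : 'I_t -> R)
  (Ct alpha eps : R) (Mprime Mstar Mhat : {set 'I_n}) :
  (2 <= k)%N -> (k <= n)%N -> (n < t)%N ->
  (forall i, calM k (pulls i)) ->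
  Amat (R:=R) pulls \in unitmx ->
  0 < Ct -> 0 < alpha -> alpha <= 1 -> 0 < eps ->
  (* M'_t : an alpha_t-approximate maximizer of ||chi_M||_{A^{-1}} *)
  calM k Mprime ->
  alpha * maxnorm k (invmx (Amat (R:=R) pulls)) <= mxnorm (invmx (Amat (R:=R) pulls)) (chi Mprime) ->
  (* M^* = argmax theta(M) *)
  calM k Mstar -> (forall M, calM k M -> valS theta M <= valS theta Mstar) ->
  (* hat M^*_t = argmax hat theta_t(M) *)
  calM k Mhat ->
  (forall M, calM k M -> valS (thetahat pulls r) M <= valS (thetahat pulls r) Mhat) ->
  (* event E'_t *)
  (forall M, calM k M ->
     `|valS theta M - valS (thetahat pulls r) M|
       <= Ct * mxnorm (invmx (Amat (R:=R) pulls)) (chi M)) ->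
  (* termination at round t (max over calM \ {hat M} written pointwise) *)
  (forall M, calM k M -> M != Mhat ->
     valS (thetahat pulls r) M + (Ct * mxnorm (invmx (Amat (R:=R) pulls)) (chi Mprime)) / alpha - eps
       <= valS (thetahat pulls r) Mhat - Ct * mxnorm (invmx (Amat (R:=R) pulls)) (chi Mhat)) ->
  valS theta Mstar - valS theta Mhat <= eps.
Proof.
move=> _ _ _ _ _ Ct_gt0 alpha_gt0 _ eps_gt0 _ Mprime_approx Mstar_k _ Mhat_k _ HE Hstop.
have [<-|Mstar_neq] := eqVneq Mstar Mhat; first by rewrite subrr ltW.
apply: confidence_gap_le (HE _ Mstar_k) (HE _ Mhat_k) _ (Hstop _ Mstar_k Mstar_neq).
exact: approx_argmax_width_le (ltW Ct_gt0) alpha_gt0 (mxnorm_le_maxnorm _ Mstar_k) Mprime_approx.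
Qed.
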